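(* Let $(X,d)$ be a metric space, $\mu$ a non-atomic Borel measure on $X$, $m$ a Borel measure on $X$ and $0<p<\infty$. If a function $f:X\to\mathbb R$ has a $p$-weak upper gradient $\rho\in L^p(m)$, then $f$ is $ACC_p$.
   Context: A path is a continuous map $\gamma:[a,b]\to X$; a subpath is a restriction to a subinterval, trivial if that interval is a point; $\mathrm{Im}(\gamma)=\gamma([a,b])$. $\mu$ non-atomic: $\mu(\{x\})=0$ for all $x$. $\Gamma^\mu$ is the set of all non-trivial injective paths $\gamma$ with $0<\mu(\mathrm{Im}(\tilde\gamma))<\infty$ for every non-trivial subpath $\tilde\gamma$. For Borel $g\ge0$, $\int_\gamma g:=\int_{\mathrm{Im}(\gamma)}g\,d\mu$. For $\gamma:[a,b]\to X$ in $\Gamma^\mu$, $h(\gamma)=\mu(\mathrm{Im}(\gamma))$ and $\nu_\gamma(x)=\mu(\gamma([a,x]))$ is a bijection of $[a,b]$ onto $[0,h(\gamma)]$; the $\mu$-arc length parametrization is $\gamma_h=\gamma\circ\nu_\gamma^{-1}:[0,h(\gamma)]\to X$. For $\Gamma\subset\Gamma^\mu$, $\mathrm{Mod}_p(\Gamma)=\inf\int_Xg^p\,dm$ over Borel $g\ge0$ with $\int_\gamma g\ge1$ for all $\gamma\in\Gamma$; ''$p$-almost every path'' means all paths of $\Gamma^\mu$ outside a family of $p$-modulus zero. A Borel $\rho\ge0$ is a $p$-weak upper gradient of $f$ if $|f(x)-f(y)|\le\int_\gamma\rho$ for $p$-almost every $\gamma\in\Gamma^\mu$ with endpoints $x,y$.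 $f$ is $ACC_p$ if $f\circ\gamma_h:[0,h(\gamma)]\to\mathbb R$ is absolutely continuous for $p$-almost every $\gamma\in\Gamma^\mu$. *)

From HB Require Import structures.
From mathcomp Require Import all_boot all_order all_algebra.
From mathcomp Require Import all_classical all_reals all_analysis.
From mathcomp Require Import measurable_realfun.
Set Implicit Arguments. Unset Strict Implicit. Unset Printing Implicit Defensive.
Import Order.TTheory GRing.Theory Num.Theory.
Import numFieldNormedType.Exports.
Local Open Scope classical_set_scope.
Local Open Scope ring_scope.

(* Metric spaces with a distinguished point (mathcomp-analysis measurable
   types are pointed, i.e. nonempty). *)
#[short(type="pmetricType")]
HB.structure Definition PointedMetric (K : numDomainType) :=
  { M of Metric K M & isPointed M }.

Notation borel X := (g_sigma_algebraType (@open X)).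

(* A path gamma : [pa, pb] -> X, represented by its parameter interval and a
   map R -> X (only its values on [pa, pb] matter). *)
Record path (R : realType) (X : Type) := Path { pa : R; pb : R; pmap : R -> X }.

Section Paths.
Context (R : realType) (X : pmetricType R).
Implicit Types (g : path R X).

Definition icc (a b : R) : set R := [set t | a <= t <= b].

Definition is_path g :=
  pa g <= pb g /\ {within icc (pa g) (pb g), continuous (pmap g)}.

Definition Im g : set X := pmap g @` icc (pa g) (pb g).

Variable mu : {measure set (borel X) -> \bar R}.

Definition Gamma_mu : set (path R X) := fun g =>
  [/\ is_path g, pa g < pb g,
      (forall s t, s \in icc (pa g) (pb g) -> t \in icc (pa g) (pb g) ->
         pmap g s = pmap g t -> s = t) &
      (forall c d, pa g <= c -> c < d -> d <= pb g ->
         (0 < mu (pmap g @` icc c d) < +oo)%E)].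

Definition line_int (h : borel X -> \bar R) g : \bar R :=
  (\int[mu]_(x in (Im g : set (borel X))) h x)%E.

Variables (m : {measure set (borel X) -> \bar R}) (p : R).

Definition admissible (Gam : set (path R X)) (h : borel X -> \bar R) :=
  [/\ measurable_fun [set: borel X] h, (forall x, 0 <= h x)%E &
      forall g, Gam g -> (1 <= line_int h g)%E].

Definition Mod_p (Gam : set (path R X)) : \bar R :=
  ereal_inf [set (\int[m]_x (h x `^ p))%E | h in admissible Gam].

Definition p_ae (P : path R X -> Prop) :=
  exists N : set (path R X), [/\ N `<=` Gamma_mu, Mod_p N = 0%E &
    forall g, Gamma_mu g -> ~ N g -> P g].

Definition p_weak_upper_gradient (f : X -> R) (rho : borel X -> \bar R) :=
  [/\ measurable_fun [set: borel X] rho, (forall x, 0 <= rho x)%E &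
    p_ae (fun g => ((`|f (pmap g (pa g)) - f (pmap g (pb g))|)%:E
                     <= line_int rho g)%E)].

Definition hlen g : R := fine (mu (Im g)).
Definition nu g (t : R) : R := fine (mu (pmap g @` icc (pa g) t)).
Definition nu_inv g (s : R) : R :=
  xget (pa g) [set t | t \in icc (pa g) (pb g) /\ nu g t = s].
Definition gamma_h g (s : R) : X := pmap g (nu_inv g s).

End Paths.

Definition abs_cont (R : realType) (c d : R) (u : R -> R) :=
  forall e : R, 0 < e -> exists2 delta : R, 0 < delta &
    forall (n : nat) (a b : nat -> R),
      (forall i, (i < n)%N -> c <= a i /\ a i <= b i /\ b i <= d) ->
      (forall i j, (i < n)%N -> (j < n)%N -> i <> j -> b i <= a j \/ b j <= a i) ->
      \sum_(i < n) (b i - a i) < delta ->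
      \sum_(i < n) `|u (b i) - u (a i)| < e.

Definition ACC_p (R : realType) (X : pmetricType R)
  (mu m : {measure set (borel X) -> \bar R}) (p : R) (f : X -> R) :=
  p_ae mu m p (fun g => abs_cont 0 (hlen mu g) (f \o gamma_h mu g)).

(* Let N0 be the exceptional family of the upper gradient inequality. The paths
   of Gamma^mu having a subpath in N0, or along which rho has infinite integral,
   form a family of p-modulus zero: the first family is minorized by N0, and for
   the second k * rho is admissible for every k > 0 while its p-energy
   k^p * \int rho^p tends to 0. Along every other path the inequality holds on
   all subpaths. In the mu-arc length parametrization, disjoint parameter
   intervals of total length < delta correspond to arcs of total mu-measure
   < delta that overlap only in (null) endpoints, so the absolute continuity of
   the integral of rho over the path bounds the variation of f. *)

From Pilot Require Import Defs.
From HB Require Import structures.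
From mathcomp Require Import all_boot all_order all_algebra.
From mathcomp Require Import all_classical all_reals all_analysis.
From mathcomp Require Import measurable_realfun.
From mathcomp Require Import lra.
Import Order.TTheory GRing.Theory Num.Theory.
Import numFieldNormedType.Exports.
Local Open Scope classical_set_scope.
Local Open Scope ring_scope.

Section ge0_integral_small_sets.
Context {d} {T : measurableType d} {R : realType} {mu : {measure set T -> \bar R}}.

Lemma measureD_null (A N : set T) : measurable A -> measurable N ->
  mu N = 0%E -> mu (A `\` N) = mu A.
Proof.
move=> mA mN N0; rewrite [RHS](measureDI mu mA mN).
by rewrite (@subset_measure0 _ _ _ mu (A `&` N) N) ?adde0 //; exact: measurableI.
Qed.

Context {rho : T -> \bar R}.
Hypotheses (mrho : measurable_fun setT rho) (rho_ge0 : forall x, (0 <= rho x)%E).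

Lemma ge0_integral_setD_null (A N : set T) : measurable A -> measurable N ->
  mu N = 0%E -> (\int[mu]_(x in A `\` N) rho x = \int[mu]_(x in A) rho x)%E.
Proof.
move=> mA mN N0.
rewrite -[in RHS](setUIDK A N) setUC ge0_integral_setU //; last 4 first.
- exact: measurableD.
- exact: measurableI.
- exact: measurable_funTS.
- by rewrite disj_set2E; apply/eqP/seteqP; split => // x [[_ nN] [_ /nN]].
rewrite (@null_set_integral _ _ _ mu (A `&` N)) ?adde0 //.
- exact: measurableI.
- exact: measurable_funTS.
- by apply: (@subset_measure0 _ _ _ mu (A `&` N) N) => //; exact: measurableI.
Qed.

Lemma ge0_integral_abs_continuous (D : set T) : measurable D ->
  (\int[mu]_(x in D) rho x < +oo)%E -> forall e : R, 0 < e ->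
  exists2 delta : R, 0 < delta & forall A, measurable A -> A `<=` D ->
    (mu A < delta%:E)%E -> (\int[mu]_(x in A) rho x < e%:E)%E.
Proof.
move=> mD rho_fin e e0.
have rho_int : mu.-integrable D rho.
  apply/integrableP; split; first exact: measurable_funTS.
  by under eq_integral do rewrite gee0_abs //.
pose F := (fine \o rho) \_ D.
have mF : measurable_fun setT (EFin \o fine \o rho).
  by do 2 apply: measurableT_comp => //.
have F_int : mu.-integrable setT (EFin \o F).
  rewrite /F -restrict_EFin; apply/(integrable_mkcond _ mD).
  apply/integrableP; split; first exact: measurable_funTS.
  apply: le_lt_trans rho_fin; apply: ge0_le_integral => //.
  - by apply: measurableT_comp => //; exact: measurable_funTS.
  - exact: measurable_funTS.
  - by move=> x _ /=; rewrite ger0_norm ?fine_ge0 //; case: (rho x) (rho_ge0 x).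
have [delta [delta0 small]] := integral_normr_continuous F_int e0.
exists delta => // A mA AD muA.
have -> : (\int[mu]_(x in A) rho x = \int[mu]_(x in A) (`|F x|)%:E)%E.
  apply: ae_eq_integral => //.
  - exact: measurable_funTS.
  - apply: measurable_funTS; do 2 apply: measurableT_comp => //.
    apply/(measurable_restrictT _ mD)/measurable_funTS.
    exact: measurableT_comp.
  apply: filterS (integrable_ae mD rho_int) => x rho_finx /AD Dx.
  by rewrite /F patchT ?inE //= ger0_norm ?fine_ge0 // fineK // rho_finx.
have := small A mA muA; rewrite -lte_fin /Rintegral fineK //.
apply: integrable_fin_num => //.
apply: (integrableS measurableT) => //; exact: (integrable_abse F_int).
Qed.

Lemma ge0_integral_abs_continuous_sum (D : set T) : measurable D ->
  (\int[mu]_(x in D) rho x < +oo)%E -> forall e : R, 0 < e ->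
  exists2 delta : R, 0 < delta & forall n (B : 'I_n -> set T),
    (forall i, measurable (B i)) -> (forall i, B i `<=` D) -> trivIset setT B ->
    (\sum_(i < n) mu (B i) < delta%:E)%E ->
    (\sum_(i < n) \int[mu]_(x in B i) rho x < e%:E)%E.
Proof.
move=> mD rho_fin e e0.
have [delta delta0 small] := ge0_integral_abs_continuous _ mD rho_fin _ e0.
exists delta => // n B mB BD tB muB.
have mU : measurable (\big[setU/set0]_(i < n) B i).
  by apply: bigsetU_measurable => i _; exact: mB.
have UD : \big[setU/set0]_(i < n) B i `<=` D.
  by elim/big_ind: _ => // A1 A2 A1D A2D x [/A1D|/A2D].
rewrite -(@ge0_integral_bigsetU _ _ _ mu 'I_n B rho (index_enum 'I_n)) //.
- by apply: small => //; rewrite (@measure_bigsetU_ord _ _ _ mu n xpredT B).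
- exact: index_enum_uniq.
- exact: sub_trivIset tB.
- exact: measurable_funTS.
Qed.

End ge0_integral_small_sets.

Lemma poweR_maxe_le (R : realType) (u v : \bar R) (p : R) :
  (maxe u v `^ p <= u `^ p + v `^ p)%E.
Proof.
by rewrite /Order.max; case: ifP => _; rewrite ?leeDr ?leeDl // poweR_ge0.
Qed.

Section modulus.
Context (R : realType) (X : pmetricType R) (mu m : {measure set (borel X) -> \bar R}).
Variable p : R.
Implicit Types (N : set (Defs.path R X)) (g : Defs.path R X) (h : borel X -> \bar R).
Local Notation Mod := (Mod_p mu m p).
Local Notation admissible := (admissible mu).

Let measurable_poweR_fun h : measurable_fun setT h ->
  measurable_fun setT (fun x => h x `^ p)%E.
Proof. exact: measurableT_comp (measurable_poweR p). Qed.

Lemma Mod_p_ge0 N : (0 <= Mod N)%E.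
Proof.
apply: le_ereal_inf_tmp => _ [h [_ h_ge0 _] <-].
by apply: integral_ge0 => x _; exact: poweR_ge0.
Qed.

Lemma le_Mod_p N N' : (forall h, admissible N' h -> admissible N h) ->
  (Mod N <= Mod N')%E.
Proof. by move=> NN'; apply: ereal_inf_le_tmp => _ [h /NN' hN <-]; exists h. Qed.

Lemma Mod_p_eq0P N : Mod N = 0%E <->
  forall e : R, 0 < e ->
    exists2 h, admissible N h & (\int[m]_x (h x `^ p) < e%:E)%E.
Proof.
split=> [N0 e e0|small].
  have : (Mod N < e%:E)%E by rewrite N0 lte_fin.
  by case/ereal_inf_lt => _ [h hN <-]; exists h.
apply/eqP; rewrite eq_le Mod_p_ge0 andbT; apply/lee_addgt0Pr => e e0.
have [h hN he] := small e e0.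
by rewrite add0e; apply: ge_ereal_inf; exists (\int[m]_x (h x `^ p))%E;
  [exists h | exact: ltW].
Qed.

Lemma le_line_int h h' g : measurable (Defs.Im g : set (borel X)) ->
  measurable_fun setT h -> measurable_fun setT h' ->
  (forall x, 0 <= h x <= h' x)%E -> (line_int mu h g <= line_int mu h' g)%E.
Proof.
move=> mIg mh mh' hh'; apply: ge0_le_integral => //.
- by move=> x _; case/andP: (hh' x).
- exact: measurable_funTS.
- exact: measurable_funTS.
- by move=> x _; case/andP: (hh' x).
Qed.

Lemma le_Mod_p_minorized N N0 :
  (forall g, N g -> exists2 g0, N0 g0 &
     [/\ measurable (Defs.Im g0 : set (borel X)), measurable (Defs.Im g : set (borel X))
       & Defs.Im g0 `<=` Defs.Im g]) ->
  (Mod N <= Mod N0)%E.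
Proof.
move=> minor; apply: le_Mod_p => h [mh h_ge0 adm]; split => // g.
case/minor => g0 /adm h1 [mIg0 mIg sub]; apply: le_trans h1 _.
by apply: ge0_subset_integral => //; exact: measurable_funTS.
Qed.

Lemma Mod_p_setU_eq0 N1 N2 :
  (forall g, (N1 `|` N2) g -> measurable (Defs.Im g : set (borel X))) ->
  Mod N1 = 0%E -> Mod N2 = 0%E -> Mod (N1 `|` N2) = 0%E.
Proof.
move=> mIm /Mod_p_eq0P small1 /Mod_p_eq0P small2; apply/Mod_p_eq0P => e e0.
have e20 : 0 < e / 2 by rewrite divr_gt0.
have [h1 [mh1 h1_ge0 adm1] int1] := small1 _ e20.
have [h2 [mh2 h2_ge0 adm2] int2] := small2 _ e20.
pose h x := maxe (h1 x) (h2 x).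
have mh : measurable_fun setT h by exact: measurable_maxe.
exists h.
  split=> // [x|g N12g]; first by rewrite le_max h1_ge0.
  have mIg := mIm g N12g.
  by case: N12g => [/adm1|/adm2] /le_trans; apply; apply: le_line_int => // x;
    rewrite ?h1_ge0 ?h2_ge0 le_max lexx ?orbT.
apply: (@le_lt_trans _ _ (\int[m]_x (h1 x `^ p + h2 x `^ p))%E).
  apply: ge0_le_integral => //; last by move=> x _; exact: poweR_maxe_le.
  - by move=> x _; exact: poweR_ge0.
  - exact: measurable_poweR_fun.
  - by apply: emeasurable_funD; exact: measurable_poweR_fun.
rewrite ge0_integralD //; do ?[by move=> x _; exact: poweR_ge0];
  do ?exact: measurable_poweR_fun.
by rewrite [e]splitr EFinD lteD.
Qed.

Lemma Mod_p_line_int_pinfty (rho : borel X -> \bar R) N : 0 < p ->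
  measurable_fun setT rho -> (forall x, 0 <= rho x)%E ->
  (\int[m]_x (rho x `^ p) < +oo)%E ->
  (forall g, N g -> measurable (Defs.Im g : set (borel X))) ->
  (forall g, N g -> line_int mu rho g = +oo%E) ->
  Mod N = 0%E.
Proof.
move=> p0 mrho rho_ge0 rho_fin mIm rho_inf; apply/Mod_p_eq0P => e e0.
have rho_ge0p : (0 <= \int[m]_x (rho x `^ p))%E.
  by apply: integral_ge0 => x _; exact: poweR_ge0.
have rho_num : (\int[m]_x (rho x `^ p))%E \is a fin_num by rewrite ge0_fin_numE.
set C := fine (\int[m]_x (rho x `^ p))%E.
have C_ge0 : 0 <= C by exact: fine_ge0.
set q := e / (C + 1).
have q0 : 0 < q by rewrite divr_gt0 // ltr_wpDl.
set k := q `^ p^-1.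
have k0 : 0 < k by exact: powR_gt0.
have kp : k `^ p = q by rewrite -powRrM mulVf ?gt_eqF // powRr1 // ltW.
have mk : measurable_fun setT (fun x => k%:E * rho x)%E by exact: measurable_funeM.
exists (fun x => k%:E * rho x)%E.
  split => // [x|g Ng]; first by rewrite mule_ge0 // lee_fin ltW.
  rewrite /line_int ge0_integralZl_EFin //; first last.
  - exact: ltW.
  - exact: measurable_funTS.
  - exact: mIm.
  by move: (rho_inf g Ng); rewrite /line_int => ->; rewrite mulry gtr0_sg // mul1e leey.
under eq_integral do rewrite poweRM ?lee_fin ?(ltW k0) // poweR_EFin kp.
rewrite ge0_integralZl_EFin //; first last.
- exact: ltW.
- exact: measurable_poweR_fun.
- by move=> x _; exact: poweR_ge0.
rewrite -(fineK rho_num) -/C -EFinM lte_fin /q mulrAC ltr_pdivrMr ?ltr_wpDl //.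
by rewrite mulrDr mulr1 ltrDl.
Qed.

End modulus.

Section borel_metric.
Context {R : realType} {X : pmetricType R}.

Lemma closed_measurable (A : set X) : closed A -> measurable (A : set (borel X)).
Proof.
move=> cA; rewrite -[A]setCK; apply: measurableC.
by apply: sub_sigma_algebra; exact: closed_openC.
Qed.

Lemma measurable_set1_borel (x : X) : measurable ([set x] : set (borel X)).
Proof.
apply: closed_measurable; apply: accessible_closed_set1.
exact: hausdorff_accessible (@metric_hausdorff _ _).
Qed.

Lemma measurable_image_icc (f : R -> X) (c d : R) :
  {within icc c d, continuous f} -> measurable (f @` icc c d : set (borel X)).
Proof.
move=> cf; apply: closed_measurable; apply: compact_closed.
  exact: metric_hausdorff.
by apply: continuous_compact => //; rewrite /icc -set_itvcc; exact: segment_compact.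
Qed.

End borel_metric.

Definition arc {R : realType} {X : pmetricType R} (g : Defs.path R X) (c d : R) :
  set (borel X) := Defs.pmap g @` icc c d.

Section arc.
Context {R : realType} {X : pmetricType R} {mu : {measure set (borel X) -> \bar R}}.
Hypothesis mu_set1 : forall x : X, mu [set x] = 0%E.
Context {g : Defs.path R X}.
Hypothesis g_Gamma : Gamma_mu mu g.
Local Notation a := (Defs.pa g).
Local Notation b := (Defs.pb g).
Local Notation ga := (Defs.pmap g).
Local Notation arc := (arc g).
Local Notation nu := (Defs.nu mu g).
Local Notation nu_inv := (Defs.nu_inv mu g).

Lemma pa_lt_pb : a < b.
Proof. by case: g_Gamma. Qed.

Lemma pmap_inj s t : a <= s <= b -> a <= t <= b -> ga s = ga t -> s = t.
Proof. by case: g_Gamma => _ _ inj _ s_ab t_ab; apply: inj; rewrite inE. Qed.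

Lemma arc_sub c d c' d' : c' <= c -> d <= d' -> arc c d `<=` arc c' d'.
Proof.
move=> c'c dd'; apply: image_subset => t /andP[ct td].
by apply/andP; split; [exact: le_trans ct | exact: le_trans dd'].
Qed.

Lemma measurable_arc c d : a <= c -> d <= b -> measurable (arc c d).
Proof.
move=> ac db; apply: measurable_image_icc.
case: g_Gamma => -[_ cont] _ _ _; apply: continuous_subspaceW cont.
by move=> t /andP[ct td]; apply/andP; split; lra.
Qed.

Lemma arc_point c : arc c c = [set ga c].
Proof.
apply/seteqP; split => [_ [t /andP[ct tc] <-]|_ ->].
  by rewrite /= (@le_anti _ _ t c) ?ct ?tc.
by exists c; rewrite // /icc /= lexx.
Qed.

Lemma measure_arc_gt0_lty c d : a <= c -> c < d -> d <= b ->
  (0 < mu (arc c d) < +oo)%E.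
Proof. by case: g_Gamma => _ _ _; apply. Qed.

Lemma measure_arc_fin_num c d : a <= c -> c <= d -> d <= b ->
  mu (arc c d) \is a fin_num.
Proof.
move=> ac; rewrite le_eqVlt => /predU1P[<- _|cd db]; first by rewrite arc_point mu_set1.
by case/andP: (measure_arc_gt0_lty _ _ ac cd db) => /ltW ? ?; rewrite ge0_fin_numE.
Qed.

Lemma measure_arc_split c e d : a <= c -> c <= e -> e <= d -> d <= b ->
  mu (arc c d) = (mu (arc c e) + mu (arc e d))%E.
Proof.
move=> ac ce ed db.
have arcU : arc c d = arc c e `|` arc e d.
  rewrite -image_setU; congr image; apply/seteqP; split => t; rewrite /icc /=.
    move=> /andP[ct td]; have [te|et] := leP t e; [left|right].
      by apply/andP.
    by apply/andP; split => //; exact: ltW.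
  by case => /andP[? ?]; apply/andP; split; lra.
have arcI : arc c e `&` arc e d = [set ga e].
  apply/seteqP; split => [_ [[s /andP[cs se] <-] [t /andP[et td] ts]]|_ ->].
    suff -> : s = e by [].
    have st : s = t by apply: pmap_inj => //; apply/andP; split; lra.
    lra.
  by split; exists e => //; apply/andP; split.
rewrite arcU measureUfinr; first by rewrite arcI mu_set1 sube0.
- by apply: measurable_arc => //; lra.
- by apply: measurable_arc => //; lra.
- by rewrite ltey_eq measure_arc_fin_num //; lra.
Qed.

Lemma measure_arc_shrink x : a <= x -> x <= b -> forall e : R, 0 < e ->
  exists2 r : R, 0 < r &
    (mu (arc (Num.max a (x - r)%R) (Num.min b (x + r)%R)) < e%:E)%E.
Proof.
move=> ax xb e e0.
pose r n : R := n.+1%:R^-1.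
have r_gt0 n : 0 < r n by rewrite invr_gt0.
pose F n := arc (Num.max a (x - r n)) (Num.min b (x + r n)).
have mF n : measurable (F n) by apply: measurable_arc; rewrite ?le_max ?ge_min lexx.
have F_nonincr : nonincreasing_seq F.
  move=> n k nk; rewrite subsetEset; apply: arc_sub.
    by apply: le_max2 => //; rewrite lerD2l lerN2 lef_pV2 ?posrE ?ler_nat.
  by apply: le_min2 => //; rewrite lerD2l lef_pV2 ?posrE ?ler_nat.
have capF : \bigcap_n F n = [set ga x].
  apply/seteqP; split => [y Fy|_ ->]; last first.
    move=> n _; exists x => //; apply/andP; split.
      by rewrite ge_max ax /= lerBlDr lerDl ltW.
    by rewrite le_min xb /= lerDl ltW.
  have [u /andP[+ +] yE] := Fy 0%N Logic.I; subst y.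
  rewrite ge_max le_min => /andP[au _] /andP[ub _].
  suff -> : u = x by [].
  apply/eqP; rewrite -subr_eq0 -normr_eq0 eq_le normr_ge0 andbT.
  apply/ler_addgt0Pr => _ /posnumP[eps]; rewrite add0r.
  have [n ny] := ltr_add_invr (gt0 eps); rewrite add0r in ny.
  have [v /andP[+ +] vu] := Fy n Logic.I.
  rewrite ge_max le_min => /andP[av xv] /andP[vb vx].
  have vu_eq : v = u by apply: pmap_inj => //; apply/andP; split.
  rewrite -vu_eq; apply: ltW; apply: le_lt_trans ny; rewrite -/(r n).
  move: (r n) xv vx => q xv vx.
  by rewrite ler_distlC; apply/andP; split; lra.
have F0_fin : (mu (F 0%N) < +oo)%E.
  rewrite ltey_eq measure_arc_fin_num ?le_max ?ge_min ?lexx //.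
  rewrite ge_max !le_min; have := r_gt0 0%N; move: (r 0%N) => q q0.
  by repeat (apply/andP; split); lra.
have := nonincreasing_cvg_mu F0_fin mF _ F_nonincr.
rewrite capF mu_set1 => /(_ (measurable_set1_borel (ga x))) cvF.
have e0' : (0 < e%:E)%E by rewrite lte_fin.
have [n _ small] := cvF _ (open_ereal_lt' e0').
by exists (r n) => //; exact: small n (leqnn n).
Qed.

Lemma nuB c d : a <= c -> c <= d -> d <= b -> nu d - nu c = fine (mu (arc c d)).
Proof.
move=> ac cd db; rewrite /Defs.nu -/(arc a d) -/(arc a c).
have cb := le_trans cd db.
rewrite (@measure_arc_split a c d) ?lexx // fineD; first by rewrite addrC addKr.
  exact: measure_arc_fin_num.
exact: measure_arc_fin_num.
Qed.

Lemma nu_pa : nu a = 0.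
Proof. by rewrite /Defs.nu -/(arc a a) arc_point mu_set1. Qed.

Lemma nu_le c d : a <= c -> c <= d -> d <= b -> nu c <= nu d.
Proof. by move=> ac cd db; rewrite -subr_ge0 nuB // fine_ge0. Qed.

Lemma nu_lt c d : a <= c -> c < d -> d <= b -> nu c < nu d.
Proof.
move=> ac cd db; rewrite -subr_gt0 nuB //; last exact: ltW.
by apply: fine_gt0; exact: measure_arc_gt0_lty.
Qed.

Lemma nu_dist_le c d c' d' : a <= c' -> c' <= c <= d' -> c' <= d <= d' ->
  d' <= b -> `|nu c - nu d| <= fine (mu (arc c' d')).
Proof.
wlog cd : c d / c <= d => [nu_dist_le_ord ac' c_in d_in d'b|].
  have [cd|/ltW dc] := leP c d; first exact: nu_dist_le_ord.
  by rewrite distrC; exact: nu_dist_le_ord.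
move=> ac' /andP[c'c cd'] /andP[c'd dd'] d'b.
have ac : a <= c by exact: le_trans c'c.
have db : d <= b by exact: le_trans d'b.
rewrite distrC ger0_norm ?subr_ge0 ?nu_le // nuB //.
apply: fine_le; [exact: measure_arc_fin_num | |].
- by apply: measure_arc_fin_num => //; exact: le_trans dd'.
- apply: le_measure; rewrite ?inE; [exact: measurable_arc..| exact: arc_sub].
Qed.

Lemma nu_continuous : {within `[a, b], continuous nu}.
Proof.
apply/subspace_continuousP => x; rewrite /= in_itv /= => /andP[ax xb].
apply/cvgrPdist_lt => e e0.
have [r r0 small] := measure_arc_shrink _ ax xb _ e0.
set c' := Num.max a (x - r); set d' := Num.min b (x + r).
have ac' : a <= c' by rewrite le_max lexx.
have d'b : d' <= b by rewrite ge_min lexx.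
have near_in y : a <= y <= b -> `|x - y| < r -> c' <= y <= d'.
  move=> /andP[ay yb] xy; rewrite ge_max le_min ay yb /=.
  by rewrite (ltW (ltr_distlBl xy)) (ltW (ltr_distlCDr xy)).
have /near_in x_in : a <= x <= b by rewrite ax xb.
have {x_in}x_in := x_in (_ : `|x - x| < r); rewrite subrr normr0 in x_in.
rewrite near_withinE; apply/nbhs_normP; exists r => //= y /= xy.
rewrite in_itv /= => /near_in/(_ xy) y_in.
have c'd' : c' <= d' by case/andP: y_in => /le_trans; apply.
apply: le_lt_trans (nu_dist_le _ _ _ _ ac' (x_in r0) y_in d'b) _.
by rewrite -lte_fin fineK // measure_arc_fin_num.
Qed.

Lemma nu_invP s : 0 <= s -> s <= hlen mu g -> a <= nu_inv s <= b /\ nu (nu_inv s) = s.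
Proof.
move=> s0 sh.
have [t t_ab nut] : exists2 t, t \in `[a, b] & nu t = s.
  apply: IVT (ltW pa_lt_pb) nu_continuous _.
  have nub0 : 0 <= nu b by rewrite -nu_pa nu_le ?lexx // ltW // pa_lt_pb.
  by rewrite nu_pa (min_idPl nub0) (max_idPr nub0) s0.
have [] := @xgetPex _ a [set t | t \in icc a b /\ nu t = s] _.
  by exists t; split => //; move: t_ab; rewrite in_itv inE.
by rewrite inE => ab_nu_inv nu_nu_inv.
Qed.

Lemma nu_inv_le s1 s2 : 0 <= s1 -> s1 <= s2 -> s2 <= hlen mu g ->
  nu_inv s1 <= nu_inv s2.
Proof.
move=> s10 s12 s2h.
have [/andP[a1 b1] e1] := nu_invP _ s10 (le_trans s12 s2h).
have [/andP[a2 b2] e2] := nu_invP _ (le_trans s10 s12) s2h.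
rewrite leNgt; apply/negP => /(nu_lt _ _ a2)/(_ b1).
by rewrite e1 e2 ltNge s12.
Qed.

Lemma measure_arc_nu_inv s1 s2 : 0 <= s1 -> s1 <= s2 -> s2 <= hlen mu g ->
  mu (arc (nu_inv s1) (nu_inv s2)) = (s2 - s1)%:E.
Proof.
move=> s10 s12 s2h.
have [/andP[a1 _] e1] := nu_invP _ s10 (le_trans s12 s2h).
have [/andP[_ b2] e2] := nu_invP _ (le_trans s10 s12) s2h.
have le12 := nu_inv_le _ _ s10 s12 s2h.
by rewrite -[in RHS]e1 -[in RHS]e2 nuB // fineK // measure_arc_fin_num.
Qed.

Lemma Gamma_mu_subpath c d : a <= c -> c < d -> d <= b ->
  Gamma_mu mu (Path c d ga).
Proof.
move=> ac cd db; split => //=.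
- split => /=; first exact: ltW.
  case: g_Gamma => -[_ cont] _ _ _; apply: continuous_subspaceW cont.
  by move=> t /andP[ct td]; apply/andP; split; lra.
- move=> s t; rewrite !inE => /andP[cs sd] /andP[ct td].
  by apply: pmap_inj; apply/andP; split; lra.
- by move=> c' d' cc' c'd' d'd; apply: measure_arc_gt0_lty; lra.
Qed.

Lemma arcD1_disjoint c d c' d' : a <= c -> d <= c' -> d' <= b ->
  (arc c d `\` [set ga c]) `&` (arc c' d' `\` [set ga c']) = set0.
Proof.
move=> ac dc' d'b; apply/seteqP; split => // _ [[[u /andP[cu ud] <-] _]].
move=> [[v /andP[c'v vd'] vu] /= nv].
have uv : u = v.
  by apply: pmap_inj; [apply/andP; split; lra | apply/andP; split; lra | rewrite vu].
by apply: nv; congr ga; lra.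
Qed.

Lemma abs_cont_comp_gamma_h (f : X -> R) (rho : borel X -> \bar R) :
  measurable_fun setT rho -> (forall x, 0 <= rho x)%E ->
  (forall c d, a <= c -> c < d -> d <= b ->
     ((`|f (ga c) - f (ga d)|)%:E <= \int[mu]_(x in arc c d) rho x)%E) ->
  (\int[mu]_(x in arc a b) rho x < +oo)%E ->
  abs_cont 0 (hlen mu g) (f \o gamma_h mu g).
Proof.
move=> mrho rho_ge0 f_arc rho_fin e e0.
have [delta delta0 small] := ge0_integral_abs_continuous_sum mrho rho_ge0 _
  (measurable_arc _ _ (lexx a) (lexx b)) rho_fin _ e0.
exists delta => // n s t st_in st_disj st_sum.
pose c (i : 'I_n) := nu_inv (s i); pose d (i : 'I_n) := nu_inv (t i).
(* Adjacent arcs share an endpoint, which is null since mu has no atoms. *)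
pose B i := arc (c i) (d i) `\` [set ga (c i)].
have cd_in i : [/\ a <= c i, c i <= d i & d i <= b].
  have [s0 [st th]] := st_in i (ltn_ord i).
  have [/andP[ac _] _] := nu_invP _ s0 (le_trans st th).
  have [/andP[_ db] _] := nu_invP _ (le_trans s0 st) th.
  by split => //; exact: nu_inv_le.
have m_arc i : measurable (arc (c i) (d i)).
  by have [ac cd db] := cd_in i; exact: measurable_arc.
have mB i : measurable (B i).
  by apply: measurableD; [exact: m_arc | exact: measurable_set1_borel].
have muB i : mu (B i) = (t i - s i)%:E.
  have [s0 [st th]] := st_in i (ltn_ord i).
  rewrite measureD_null //; last exact: measurable_set1_borel.
  exact: measure_arc_nu_inv.
have f_B (i : 'I_n) :
    ((`|(f \o gamma_h mu g) (t i) - (f \o gamma_h mu g) (s i)|)%:E <=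
     \int[mu]_(x in B i) rho x)%E.
  rewrite ge0_integral_setD_null //= ?/gamma_h -/(c i) -/(d i); last first.
    exact: measurable_set1_borel.
  have [ac cd db] := cd_in i; have [cd'|dc] := ltP (c i) (d i).
    by rewrite distrC; exact: f_arc.
  by rewrite (@le_anti _ _ (d i) (c i)) ?dc ?cd // subrr normr0 integral_ge0.
have B_disj : trivIset setT B.
  have B_disj_le (k l : 'I_n) : t k <= s l -> B k `&` B l = set0.
    move=> tksl; have [ac _ _] := cd_in k; have [_ _ db] := cd_in l.
    have [sk0 [stk _]] := st_in k (ltn_ord k).
    have [_ [stl thl]] := st_in l (ltn_ord l).
    apply: arcD1_disjoint => //; apply: nu_inv_le => //.
    - exact: le_trans stk.
    - exact: le_trans thl.
  move=> i j _ _; apply: contraPP => /eqP ij.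
  have {}ij : (i : nat) <> j by move=> /val_inj; exact/eqP.
  by case: (st_disj i j (ltn_ord i) (ltn_ord j) ij) => /B_disj_le;
    [|rewrite setIC] => -> [x []].
rewrite -lte_fin -sumEFin; apply: le_lt_trans (small n B mB _ B_disj _).
- by apply: lee_sum => i _; exact: f_B.
- by move=> i x [+ _]; have [ac _ db] := cd_in i; exact: arc_sub.
- by rewrite (eq_bigr _ (fun i _ => muB i)) sumEFin lte_fin.
Qed.

End arc.

Theorem lemma3p6 (R : realType) (X : pmetricType R)
  (mu m : {measure set (borel X) -> \bar R}) (p : R)
  (f : X -> R) (rho : borel X -> \bar R) :
  (forall x : X, mu [set x] = 0%E) ->
  0 < p ->
  measurable_fun [set: borel X] rho -> (forall x, (0 <= rho x)%E) ->
  (\int[m]_x (rho x `^ p) < +oo)%E ->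
  p_weak_upper_gradient mu m p f rho ->
  ACC_p mu m p f.
Proof.
move=> mu_set1 p0 mrho rho_ge0 rho_Lp [_ _ [N0 [_ N0_null N0_ineq]]].
pose N1 := [set g | Gamma_mu mu g /\ exists c d, [/\ Defs.pa g <= c, c < d,
  d <= Defs.pb g & N0 (Path c d (Defs.pmap g))]].
pose N2 := [set g | Gamma_mu mu g /\ line_int mu rho g = +oo%E].
have mIm g : Gamma_mu mu g -> measurable (Defs.Im g : set (borel X)).
  by move=> Gg; exact: measurable_arc Gg _ _ (lexx _) (lexx _).
exists (N1 `|` N2); split; first by move=> g [[]|[]].
  apply: Mod_p_setU_eq0; first by move=> g [[/mIm]|[/mIm]].
    apply/eqP; rewrite eq_le Mod_p_ge0 andbT -N0_null.
    apply: le_Mod_p_minorized => g [Gg [c [d [ac cd db N0cd]]]].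
    exists (Path c d (Defs.pmap g)) => //; split; last exact: arc_sub.
    - exact: measurable_arc Gg _ _ ac db.
    - exact: mIm.
  by apply: Mod_p_line_int_pinfty p0 mrho rho_ge0 rho_Lp _ _ => g [/mIm].
move=> g Gg /not_orP[notN1 notN2].
apply: (abs_cont_comp_gamma_h mu_set1 Gg f rho mrho rho_ge0).
  move=> c d ac cd db; apply: N0_ineq (Gamma_mu_subpath Gg _ _ ac cd db) _ => N0cd.
  by apply: notN1; split => //; exists c, d.
by rewrite ltey; apply/eqP => rho_inf; exact: notN2.
Qed.
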